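(* Let $n\ge2$. For pairs $(\alpha,\beta)\in\{0,\dots,2^n-1\}^2$ define $y_{\alpha,\beta}(x)=(\alpha\dotplus x)\oplus(\beta\dotplus x)$ for $x\in\{0,\dots,2^n-1\}$. Say that a finite list of pairs $(\alpha^{(1)},\beta^{(1)}),\dots,(\alpha^{(m)},\beta^{(m)})$ determines $x$ modulo $2^{n-1}$ if for all $x,x'\in\{0,\dots,2^n-1\}$, $y_{\alpha^{(j)},\beta^{(j)}}(x)=y_{\alpha^{(j)},\beta^{(j)}}(x')$ for all $j=1,\dots,m$ implies $x\equiv x'\pmod{2^{n-1}}$. Let $m(n)$ be the least $m$ for which such a list of $m$ pairs exists. Then $m(2)=1$ and $m(n)=2$ for all $n>2$.
   Context: $a\dotplus b=(a+b)\bmod 2^n$; $\oplus$ is bitwise XOR of $n$-bit integers. *)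

From mathcomp Require Import all_boot.
From Stdlib Require Import PeanoNat.

Definition addmod (n a b : nat) : nat := (a + b) %% 2 ^ n.

Definition yab (n alpha beta x : nat) : nat :=
  Nat.lxor (addmod n alpha x) (addmod n beta x).

Definition determines (n : nat) (s : seq (nat * nat)) : Prop :=
  (forall p, p \in s -> p.1 < 2 ^ n /\ p.2 < 2 ^ n) /\
  forall x x', x < 2 ^ n -> x' < 2 ^ n ->
    (forall p, p \in s -> yab n p.1 p.2 x = yab n p.1 p.2 x') ->
    x = x' %[mod 2 ^ (n - 1)].

Definition is_min_length (n m : nat) : Prop :=
  (exists s, size s = m /\ determines n s) /\
  (forall s, determines n s -> m <= size s).

From mathcomp Require Import all_boot zify.

(* Let z = alpha (+) x and D = beta - alpha (mod 2^n).  Then beta (+) x = z (+) D,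
   so bit i of y_{alpha,beta}(x) = z XOR (z + D) is bit i of D XOR the i-th carry
   of the addition z + D.  Hence y_{alpha,beta}(x) = y_{alpha,beta}(x') exactly
   when the additions z + D and z' + D produce the same carries below n.
   - Upper bound: with alpha = 0, z = x; the carries of x + D and x + D', where
     D and D' have complementary alternating bits 1010... and 0101..., determine
     x mod 2^(n-1) (a carry-propagation invariant, alt_carries_determine).
   - Lower bound for n > 2: for any D two distinct z, z' < 4 give the same
     carries (small_carry_collision); as 4 <= 2^(n-1) they are distinct mod
     2^(n-1), so one pair never suffices; the empty list trivially fails.
   - n = 2: the single pair (0, 1) works, checked by computation. *)

Lemma powE n : Nat.pow 2 n = 2 ^ n.
Proof. by elim: n => // n IH; rewrite expnS -IH. Qed.

(* Bit i of a, and the carry into position i when adding z and d. *)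
Definition bit (a i : nat) : bool := odd (a %/ 2 ^ i).
Definition carry (z d i : nat) : bool := 2 ^ i <= z %% 2 ^ i + d %% 2 ^ i.

Lemma testbitE a i : Nat.testbit a i = bit a i.
Proof.
have oddE k : Nat.odd k = odd k /\ Nat.even k = ~~ odd k.
  elim: k => // k [IHo IHe].
  by rewrite PeanoNat.Nat.odd_succ PeanoNat.Nat.even_succ IHo IHe negbK.
have div2E k : Nat.div2 k = k %/ 2.
  rewrite divn2; suff: Nat.div2 k = k./2 /\ Nat.div2 k.+1 = k.+1./2 by case.
  by elim: k => // k [IH1 IH2]; split; last rewrite /= IH1.
elim: i a => [|i IH] a; first by rewrite /= (oddE a).1 /bit expn0 divn1.
by rewrite /= IH div2E /bit expnS divnMA.
Qed.

Lemma bit_mod a i : bit a i = odd ((a %% 2 ^ i.+1) %/ 2 ^ i).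
Proof. by rewrite /bit expnS -modn_divl modn2; case: odd. Qed.

Lemma bit_modeq a b i n : i < n -> a = b %[mod 2 ^ n] -> bit a i = bit b i.
Proof.
move=> lt_in eq_ab; have dvd_i_n : 2 ^ i.+1 %| 2 ^ n by rewrite dvdn_exp2l.
by rewrite !bit_mod -(modn_dvdm a dvd_i_n) eq_ab modn_dvdm.
Qed.

Lemma bit_small a i : a < 2 ^ i -> bit a i = false.
Proof. by move=> lt_a; rewrite /bit divn_small. Qed.

Lemma modn_pow2S a i : a %% 2 ^ i.+1 = a %% 2 ^ i + 2 ^ i * bit a i.
Proof.
have dvd_i : 2 ^ i %| 2 ^ i.+1 by rewrite dvdn_exp2l.
have top_lt2 : a %% 2 ^ i.+1 %/ 2 ^ i < 2.
  by rewrite ltn_divLR ?expn_gt0 // -expnS ltn_mod expn_gt0.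
rewrite bit_mod {1}(divn_eq (a %% 2 ^ i.+1) (2 ^ i)) (modn_dvdm a dvd_i).
by rewrite addnC mulnC; case: (_ %/ _) top_lt2 => [|[|]].
Qed.

Lemma bit_add z d i : bit (z + d) i = bit z i (+) bit d i (+) carry z d i.
Proof.
have pos : 0 < 2 ^ i by rewrite expn_gt0.
rewrite /bit /carry.
have lt_z := ltn_pmod z pos; have lt_d := ltn_pmod d pos.
set P := 2 ^ i in pos lt_z lt_d *.
have -> : z + d = (z %/ P + d %/ P) * P + (z %% P + d %% P).
  by rewrite {1}(divn_eq z P) {1}(divn_eq d P); lia.
rewrite divnMDl // oddD; case: leqP => overflow.
  have -> : (z %% P + d %% P) %/ P = 1.
    rewrite (_ : z %% P + d %% P = 1 * P + (z %% P + d %% P - P)); last by lia.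
    by rewrite divnMDl // divn_small //; lia.
  by rewrite oddD; do 2 case: odd.
by rewrite (divn_small overflow) oddD; do 2 case: odd.
Qed.

Lemma carryS z d i : carry z d i.+1 = (2 <= bit z i + bit d i + carry z d i).
Proof.
rewrite /carry !modn_pow2S expnS.
have pos : 0 < 2 ^ i by rewrite expn_gt0.
have lt_z := ltn_pmod z pos; have lt_d := ltn_pmod d pos.
set P := 2 ^ i in pos lt_z lt_d *.
by case: (bit z i); case: (bit d i); case: leqP => ?; apply/idP/idP; lia.
Qed.

Lemma carry0 z d : carry z d 0 = false.
Proof. by rewrite /carry expn0 !modn1. Qed.

Lemma carry_modeq z d d' i n : i <= n -> d = d' %[mod 2 ^ n] ->
  carry z d i = carry z d' i.
Proof.
move=> le_in eq_dd'; have dvd_i_n : 2 ^ i %| 2 ^ n by rewrite dvdn_exp2l.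
by rewrite /carry -(modn_dvdm d dvd_i_n) eq_dd' modn_dvdm.
Qed.

(* The offset beta - alpha modulo 2^n, represented without truncation. *)
Definition gap (n alpha beta : nat) : nat := beta + 2 ^ n - alpha.

Lemma addmod_lt n a x : addmod n a x < 2 ^ n.
Proof. by rewrite /addmod powE ltn_mod expn_gt0. Qed.

Lemma addmod_gap n a b x : a < 2 ^ n ->
  addmod n b x = (addmod n a x + gap n a b) %% 2 ^ n.
Proof.
move=> lt_a; rewrite /addmod /gap powE modnDml.
by rewrite (_ : a + x + (b + 2 ^ n - a) = b + x + 2 ^ n) ?modnDr //; lia.
Qed.

Lemma yab_testbit n a b x i : a < 2 ^ n ->
  Nat.testbit (yab n a b x) i =
  (i < n) && (bit (gap n a b) i (+) carry (addmod n a x) (gap n a b) i).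
Proof.
move=> lt_a; rewrite /yab PeanoNat.Nat.lxor_spec !testbitE.
case: (ltnP i n) => [lt_in | le_ni] /=.
  rewrite (addmod_gap n a b x lt_a) (bit_modeq _ _ _ _ lt_in (modn_mod _ _)) bit_add.
  by case: (bit (addmod n a x) i); case: (bit (gap n a b) i); case: carry.
have le_pow : 2 ^ n <= 2 ^ i by rewrite leq_exp2l.
by rewrite !bit_small // (leq_trans (addmod_lt _ _ _)).
Qed.

Lemma yab_eq_carries n a b x x' : a < 2 ^ n ->
  yab n a b x = yab n a b x' <->
  forall i, i < n ->
    carry (addmod n a x) (gap n a b) i = carry (addmod n a x') (gap n a b) i.
Proof.
move=> lt_a; split => [eq_y i lt_in | eq_c].
  have := congr1 (Nat.testbit ^~ i) eq_y; rewrite /= !yab_testbit // lt_in /=.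
  by move/addbI.
apply: PeanoNat.Nat.bits_inj => i; rewrite !yab_testbit //.
by case: (ltnP i n) => // lt_in; rewrite eq_c.
Qed.

Fixpoint alt (k : nat) (b : bool) : nat :=
  if k is k'.+1 then b + 2 * alt k' (~~ b) else 0.

Lemma alt_lt k b : alt k b < 2 ^ k.
Proof. by elim: k b => // k IH b /=; rewrite expnS; have := IH (~~ b); case: b; lia. Qed.

Lemma alt_bit k b i : i < k -> bit (alt k b) i = b (+) odd i.
Proof.
elim: k b i => [|k IH] b [|i] //= lt_ik.
  by rewrite /bit expn0 divn1 oddD oddM; case: b.
have -> : bit (b + 2 * alt k (~~ b)) i.+1 = bit (alt k (~~ b)) i.
  have b_lt2 : b < 2 by case: b.
  by rewrite /bit expnS divnMA addnC mulnC divnMDl // (divn_small b_lt2) addn0.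
by rewrite IH //; case: b; case: odd.
Qed.

Section AlternatingCarries.

(* Add to z the complementary m-bit patterns D (bits 1,0,1,... from bit 0) and
   D' (bits 0,1,0,...).  The carry pair (c_i, c'_i) never equals
   (bit D i, bit D' i) (alt_carries_invariant); consequently bit i of z is
   recovered from the carries: if c_i = c'_i the next carries agree iff
   bit z i = c_i, and otherwise both next carries equal bit z i. *)
Variable m : nat.
Let D := alt m true.
Let D' := alt m false.

Lemma alt_carries_invariant z i : i < m ->
  ~~ ((carry z D i == ~~ odd i) && (carry z D' i == odd i)).
Proof.
elim: i => [|i IH] lt_im; first by rewrite carry0.
have lt_im' := ltnW lt_im; move: (IH lt_im').
rewrite /D /D' !carryS !(alt_bit _ _ _ lt_im') /=.
by case: (odd i); case: (bit z i); case: carry; case: carry.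
Qed.

Lemma alt_carries_determine z z' :
  (forall i, i <= m -> carry z D i = carry z' D i /\ carry z D' i = carry z' D' i) ->
  z %% 2 ^ m = z' %% 2 ^ m.
Proof.
move=> eq_c; suff agree i : i <= m -> z %% 2 ^ i = z' %% 2 ^ i by apply: agree.
elim: i => [|i IH] le_im; first by rewrite !expn0 !modn1.
rewrite modn_pow2S (modn_pow2S z') (IH (ltnW le_im)); congr (_ + _ * _).
have [c c'] := eq_c i (ltnW le_im); have [cS c'S] := eq_c i.+1 le_im.
move: (alt_carries_invariant z i le_im) cS c'S.
rewrite /D /D' !carryS c c' !(alt_bit _ _ _ le_im) /=.
by case: (odd i); case: (bit z i); case: (bit z' i); case: (carry z' D i);
  case: (carry z' D' i).
Qed.

End AlternatingCarries.

Definition alt_pairs (n : nat) : seq (nat * nat) :=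
  [:: (0, alt (n - 1) true); (0, alt (n - 1) false)].

(* With alpha = 0 we have alpha (+) x = x, and the offset is the alternating
   pattern itself modulo 2^n; so alt_carries_determine applies to x and x'. *)
Lemma alt_pairs_determine n : 1 < n -> determines n (alt_pairs n).
Proof.
move=> lt_1n; rewrite /determines !powE.
have pos : 0 < 2 ^ n by rewrite expn_gt0.
have alt_lt_n b : alt (n - 1) b < 2 ^ n.
  by apply: leq_trans (alt_lt _ b) _; rewrite leq_exp2l //; lia.
split=> [p | x x' lt_x lt_x' eq_y]; first by rewrite !inE => /orP[] /eqP -> /=.
have addmod0 y : y < 2 ^ n -> addmod n 0 y = y.
  by move=> ?; rewrite /addmod powE modn_small.
have carries_agree b i :
    i < n -> carry x (alt (n - 1) b) i = carry x' (alt (n - 1) b) i.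
  move=> lt_in; have mem_b : (0, alt (n - 1) b) \in alt_pairs n.
    by case: b; rewrite !inE eqxx ?orbT.
  have gap0 : gap n 0 (alt (n - 1) b) = alt (n - 1) b %[mod 2 ^ n].
    by rewrite /gap subn0 modnDr.
  have := (yab_eq_carries n 0 _ x x' pos).1 (eq_y _ mem_b) i lt_in.
  by rewrite !addmod0 // !(carry_modeq _ _ _ _ _ (ltnW lt_in) gap0).
apply: alt_carries_determine => i le_i; split; apply: carries_agree; lia.
Qed.

(* For z, z' < 4 and i >= 2, carry z D i compares z + (D mod 2^i) with 2^i, where
   D mod 2^i is congruent to D mod 4; so agreement at bit 1 and on every such
   threshold comparison forces all carries to agree. *)
Lemma small_carries_agree D z z' : z < 4 -> z' < 4 ->
  carry z D 1 = carry z' D 1 ->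
  (forall R Q, 0 < Q -> R < 4 * Q -> R %% 4 = D %% 4 ->
     (4 * Q <= z + R) = (4 * Q <= z' + R)) ->
  forall i, carry z D i = carry z' D i.
Proof.
move=> lt_z lt_z' eq_c1 eq_thr [|[|i]]; rewrite ?carry0 //.
have pos : 0 < 2 ^ i by rewrite expn_gt0.
have pow4 : 2 ^ i.+2 = 4 * 2 ^ i by rewrite !expnS mulnA.
rewrite /carry pow4 !(@modn_small z) ?(@modn_small z'); try lia.
apply: eq_thr => //; first by rewrite ltn_pmod // muln_gt0.
by rewrite (@modn_dvdm (4 * 2 ^ i)) // dvdn_mulr.
Qed.

Lemma small_carry_collision D : exists z z',
  [/\ z < 4, z' < 4, z != z' & forall i, carry z D i = carry z' D i].
Proof.
have lt_D4 : D %% 4 < 4 by rewrite ltn_mod.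
have D2 : D %% 2 = D %% 4 %% 2 by rewrite modn_dvdm.
have carry1 z : carry z D 1 = (2 <= z %% 2 + D %% 4 %% 2) by rewrite /carry expn1 D2.
case E : (D %% 4) lt_D4 carry1 => [|[|[|[|r]]]] // _ carry1;
  [exists 0, 1 | exists 0, 2 | exists 0, 1 | exists 1, 3];
  split=> //; apply: small_carries_agree; rewrite ?carry1 // => R Q pos_Q lt_R eq_R;
  apply/idP/idP; lia.
Qed.

Lemma addmod_preimage n a z : a < 2 ^ n -> z < 2 ^ n ->
  addmod n a ((z + 2 ^ n - a) %% 2 ^ n) = z.
Proof.
move=> lt_a lt_z; rewrite /addmod powE modnDmr.
by rewrite (_ : a + (z + 2 ^ n - a) = z + 2 ^ n) ?modnDr ?modn_small //; lia.
Qed.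

Lemma addmod_modeq n k a x x' : k <= n -> x = x' %[mod 2 ^ k] ->
  addmod n a x = addmod n a x' %[mod 2 ^ k].
Proof.
move=> le_kn eq_x; have dvd_kn : 2 ^ k %| 2 ^ n by rewrite dvdn_exp2l.
by rewrite /addmod powE !(modn_dvdm _ dvd_kn) -modnDmr eq_x modnDmr.
Qed.

Lemma single_pair_fails n p : 2 < n -> ~ determines n [:: p].
Proof.
case: p => a b lt_2n [bounds det].
have [lt_a _] := bounds _ (mem_head _ _); rewrite powE /= in lt_a.
have pos : 0 < 2 ^ n by rewrite expn_gt0.
have le_4 : 4 <= 2 ^ (n - 1) by rewrite (_ : 4 = 2 ^ 2) // leq_exp2l //; lia.
have le_half : 2 ^ (n - 1) <= 2 ^ n by rewrite leq_exp2l // leq_subr.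
have [z [z' [lt_z lt_z' neq_zz' eq_c]]] := small_carry_collision (gap n a b).
pose pre w := (w + 2 ^ n - a) %% 2 ^ n.
have addmod_pre w : w < 4 -> addmod n a (pre w) = w.
  by move=> lt_w; rewrite addmod_preimage //; lia.
have eq_mod : pre z = pre z' %[mod 2 ^ (n - 1)].
  rewrite -powE; apply: det; rewrite ?powE ?ltn_mod // => q; rewrite inE => /eqP -> /=.
  by apply/(yab_eq_carries _ _ _ _ _ lt_a) => i _; rewrite !addmod_pre.
have := addmod_modeq n _ a _ _ (leq_subr 1 n) eq_mod.
by rewrite !addmod_pre // !modn_small; lia.
Qed.

Lemma empty_list_fails n : 1 < n -> ~ determines n [::].
Proof.
move=> lt_1n [_ det]; rewrite !powE in det.
have two_le k : 0 < k -> 2 <= 2 ^ k by move=> ?; rewrite (_ : 2 = 2 ^ 1) // leq_exp2l.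
have lt_1n' : 1 < 2 ^ n by apply: two_le; lia.
have : 0 = 1 %[mod 2 ^ (n - 1)] by apply: det => //; apply: ltnW.
by rewrite mod0n modn_small //; apply: two_le; lia.
Qed.

Lemma pair01_determines : determines 2 [:: (0, 1)].
Proof.
split=> [p | x x' lt_x lt_x' eq_y]; first by rewrite inE => /eqP ->.
move: (eq_y _ (mem_head _ _)) lt_x lt_x'; clear eq_y; vm_compute.
by case: x => [|[|[|[|x]]]] //; case: x' => [|[|[|[|x']]]].
Qed.

Theorem proposition4 :
  is_min_length 2 1 /\ (forall n : nat, 2 < n -> is_min_length n 2).
Proof.
split.
  split=> [|[|p s] det //].
    by exists [:: (0, 1)]; split=> //; exact: pair01_determines.
  by case: (empty_list_fails 2 isT det).
move=> n lt_2n; split.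
  by exists (alt_pairs n); split=> //; apply: alt_pairs_determine; lia.
move=> [|p [|q s]] det //; exfalso.
  by apply: (empty_list_fails n _ det); lia.
exact: (single_pair_fails n p lt_2n det).
Qed.
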